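(* Let $k\ge1$, let $u\colon\mathbb Z/2^k\mathbb Z\to\mathbb Z/2^k\mathbb Z$ be a T-function on $k$-bit words that is a single cycle (a cyclic permutation of length $2^k$), let $v\colon\mathbb Z/2^k\mathbb Z\to\{0,1\}$ be such that $\#\{z\in\mathbb Z/2^k\mathbb Z: v(z)=1\}$ is odd, and let $\sigma$ be an odd integer and $\varepsilon$ an even integer. For $x\in\mathbb Z_2$ write uniquely $x=\bar x+2^k\tilde x$ with $\bar x\in\{0,1,\ldots,2^k-1\}$ and $\tilde x\in\mathbb Z_2$, and define $$f(x)=u(\bar x)+2^k\bigl(\tilde x+(\sigma-\varepsilon)v(\bar x)+\varepsilon\bigr),$$ where $u(\bar x)$ is taken in $\{0,\ldots,2^k-1\}$. Then $f$ is a transitive T-function, and for every $x\in\mathbb Z_2$ and every $h\in\mathbb Z_2$ with $h\equiv0\pmod{2^k}$ one has $f(x+h)=f(x)+h$; in particular $f$ is uniformly differentiable modulo $4$ (with derivative $1$) and $N_2(f)\le k$.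
   Context: $\mathbb Z_2$ denotes the ring of 2-adic integers, $\operatorname{ord}_2$ the 2-adic valuation. A T-function is a map $f\colon\mathbb Z_2\to\mathbb Z_2$ with $a\equiv b\pmod{2^s}\Rightarrow f(a)\equiv f(b)\pmod{2^s}$ for all $s$; a T-function on $k$-bit words is a map of $\mathbb Z/2^k\mathbb Z$ with the same compatibility property for $s\le k$. $f$ is transitive if for every $n\ge1$ the reduced map $f\bmod 2^n$ is a single-cycle permutation of $\mathbb Z/2^n\mathbb Z$. $f$ is uniformly differentiable modulo $2^M$ if there exist $f'_M\colon\mathbb Z_2\to\mathbb Z_2$ and $K\in\mathbb N$ such that for all $x$ and all nonzero $h\equiv0\pmod{2^K}$, $f(x+h)\equiv f(x)+f'_M(x)h\pmod{2^{\operatorname{ord}_2h+M}}$; the least such $K$ is $N_M(f)$. *)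

(* 2-adic integers Z_2 are modelled as binary digit streams
   (x : nat -> bool, digit i has weight 2^i), with the ring operations
   defined through truncations (carry-correct). *)
From mathcomp Require Import all_boot all_algebra.
Unset Printing Implicit Defensive.
Import GRing.Theory Num.Theory.

Definition Z2 := nat -> bool.

Definition trunc (n : nat) (x : Z2) : nat := \sum_(i < n) (x i : nat) * 2 ^ i.

(** The 2-adic integer determined by a coherent family of residues
    r n (r n = the value mod 2^n, not necessarily reduced): digit n is
    the n-th binary digit of r (n+1). *)
Definition mkZ2 (r : nat -> nat) : Z2 := fun n => odd (r n.+1 %/ 2 ^ n).

Definition z2zero : Z2 := fun _ => false.
Definition z2one : Z2 := fun n => n == 0.
Definition z2add (x y : Z2) : Z2 := mkZ2 (fun n => trunc n x + trunc n y).
Definition z2mul (x y : Z2) : Z2 := mkZ2 (fun n => trunc n x * trunc n y).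
Definition z2opp (x : Z2) : Z2 := mkZ2 (fun n => 2 ^ n - trunc n x).
Definition z2_of_nat (m : nat) : Z2 := mkZ2 (fun n => m).
Definition z2_of_int (z : int) : Z2 :=
  mkZ2 (fun n => `|(z %% (2 ^ n)%:Z)%Z|%N).

Definition z2cong (s : nat) (a b : Z2) : Prop := trunc s a = trunc s b.

Definition is_ord2 (h : Z2) (n : nat) : Prop :=
  h n /\ (forall i, i < n -> h i = false).

Definition Tfun (f : Z2 -> Z2) : Prop :=
  forall (s : nat) (a b : Z2), z2cong s a b -> z2cong s (f a) (f b).

Lemma trunc_mod_lt (n : nat) (x : Z2) : trunc n x %% 2 ^ n < 2 ^ n.
Proof. by rewrite ltn_pmod // expn_gt0. Qed.

Definition truncO (n : nat) (x : Z2) : 'I_(2 ^ n) := Ordinal (trunc_mod_lt n x).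

(** the reduced map f mod 2^n on Z/2^nZ (well defined for T-functions) *)
Definition fred (n : nat) (f : Z2 -> Z2) : 'I_(2 ^ n) -> 'I_(2 ^ n) :=
  fun r => truncO n (f (z2_of_nat r)).

Definition single_cycle {T : finType} (g : T -> T) : Prop :=
  injective g /\ forall x y : T, fconnect g x y.

Definition transitive_T (f : Z2 -> Z2) : Prop :=
  forall n : nat, 0 < n -> single_cycle (fred n f).

Definition Tfun_word (k : nat) (u : 'I_(2 ^ k) -> 'I_(2 ^ k)) : Prop :=
  forall (s : nat) (a b : 'I_(2 ^ k)), s <= k ->
    a %% 2 ^ s = b %% 2 ^ s -> u a %% 2 ^ s = u b %% 2 ^ s.

Definition unif_diff_with (M : nat) (f f' : Z2 -> Z2) (K : nat) : Prop :=
  forall (x h : Z2) (n : nat), is_ord2 h n -> trunc K h = 0 ->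
    z2cong (n + M) (f (z2add x h)) (z2add (f x) (z2mul (f' x) h)).

Definition unif_differentiable (M : nat) (f : Z2 -> Z2) : Prop :=
  exists f' K, unif_diff_with M f f' K.

Definition is_N (M : nat) (f : Z2 -> Z2) (K : nat) : Prop :=
  (exists f', unif_diff_with M f f' K) /\
  (forall K', (exists f', unif_diff_with M f f' K') -> K <= K').

Definition xtilde (k : nat) (x : Z2) : Z2 := fun n => x (n + k).

Definition fdef (k : nat) (u : 'I_(2 ^ k) -> 'I_(2 ^ k))
    (v : 'I_(2 ^ k) -> bool) (sigma eps : int) (x : Z2) : Z2 :=
  let xb := truncO k x in
  z2add (z2_of_nat (u xb))
    (z2mul (z2_of_nat (2 ^ k))
       (z2add (xtilde k x)
          (z2_of_int (((sigma - eps) * (v xb)%:Z + eps)%R)))).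

(* The first k digits of x evolve under u, which runs through all of Z/2^k in
   one cycle, while the remaining digits are shifted by the integer
   (sigma - eps) v(xbar) + eps, whose parity is v(xbar).  After one full
   cycle of u the high part has therefore moved by D, the sum of these
   shifts over the cycle; D is odd because v takes the value 1 an odd number
   of times.  Multiples of an odd D reach every residue modulo 2^n, so every
   residue modulo 2^(n+k) is reached: f mod 2^n is a single cycle.  Adding
   h = 0 mod 2^k only changes the high part, where f is a translation, so
   f(x + h) = f(x) + h. *)
From mathcomp Require Import all_boot all_algebra zify ring.
From Stdlib Require Import FunctionalExtensionality Classical.
Import GRing.Theory Num.Theory.

Lemma modn_exp2S R n : R %% 2 ^ n.+1 = R %% 2 ^ n + odd (R %/ 2 ^ n) * 2 ^ n.
Proof.
have p0 : 0 < 2 ^ n by rewrite expn_gt0.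
rewrite {1}(divn_eq R (2 ^ n)) -modn2.
set q := R %/ 2 ^ n; set r := R %% 2 ^ n.
have rlt : r < 2 ^ n by rewrite ltn_pmod.
have qlt : q %% 2 < 2 by rewrite ltn_pmod.
rewrite {1}(divn_eq q 2).
have -> : (q %/ 2 * 2 + q %% 2) * 2 ^ n + r = q %/ 2 * 2 ^ n.+1 + (r + q %% 2 * 2 ^ n).
  by rewrite expnS; ring.
by rewrite modnMDl modn_small // expnS; nia.
Qed.

Lemma sum_binary_digits R n :
  \sum_(i < n) (odd (R %/ 2 ^ i) : nat) * 2 ^ i = R %% 2 ^ n.
Proof.
elim: n => [|n IH]; first by rewrite big_ord0 expn0 modn1.
by rewrite big_ord_recr /= IH modn_exp2S.
Qed.

Lemma odd_div_exp2_eqmod {a b i} :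
  a = b %[mod 2 ^ i.+1] -> odd (a %/ 2 ^ i) = odd (b %/ 2 ^ i).
Proof.
move=> eq_ab; have : a %/ 2 ^ i %% 2 = b %/ 2 ^ i %% 2.
  by rewrite !modn_divl -expnS eq_ab.
by rewrite !modn2; case: odd; case: odd.
Qed.

Lemma modn_lowDhigh k n a B : a < 2 ^ k ->
  (a + 2 ^ k * B) %% 2 ^ (n + k) = a + 2 ^ k * (B %% 2 ^ n).
Proof.
move=> alt; rewrite {1}(divn_eq B (2 ^ n)).
have -> : a + 2 ^ k * (B %/ 2 ^ n * 2 ^ n + B %% 2 ^ n) =
  B %/ 2 ^ n * 2 ^ (n + k) + (a + 2 ^ k * (B %% 2 ^ n)) by rewrite expnD; ring.
have Blt : B %% 2 ^ n < 2 ^ n by rewrite ltn_pmod // expn_gt0.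
by rewrite modnMDl modn_small // expnD; nia.
Qed.

Lemma lowDhigh_inj {k a a' B B'} : a < 2 ^ k -> a' < 2 ^ k ->
  a + 2 ^ k * B = a' + 2 ^ k * B' -> a = a' /\ B = B'.
Proof.
move=> ha ha' E.
have p0 : 0 < 2 ^ k by rewrite expn_gt0.
have := congr1 (modn^~ (2 ^ k)) E; have := congr1 (divn^~ (2 ^ k)) E.
rewrite /= ![_ + 2 ^ k * _]addnC ![2 ^ k * _]mulnC.
by rewrite !modnMDl !divnMDl // !modn_small // !divn_small // !addn0.
Qed.

Lemma odd_mul_eqmod_cancel n D a b :
  odd D -> a * D = b * D %[mod 2 ^ n] -> a = b %[mod 2 ^ n].
Proof.
move=> oD.
have cop : coprime (2 ^ n) D by rewrite coprime_sym coprimeXr // coprimen2.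
wlog le_ba : a b / b <= a.
  by move=> W E; case: (leqP b a) => [|/ltnW] h; [exact: W | apply/esym/W].
move=> /eqP E; apply/eqP; move: E.
by rewrite !eqn_mod_dvd ?leq_mul2r ?le_ba ?orbT // -mulnBl Gauss_dvdl.
Qed.

(* Multiplication by an odd number is injective, hence onto, on Z/2^n. *)
Lemma exists_odd_mul_eqmod n D h t : odd D -> exists j, h + j * D = t %[mod 2 ^ n].
Proof.
move=> oD; have P0 : 0 < 2 ^ n by rewrite expn_gt0.
pose phi (j : 'I_(2 ^ n)) : 'I_(2 ^ n) := Ordinal (ltn_pmod (h + j * D) P0).
have phi_inj : injective phi.
  move=> j1 j2 /(congr1 val) /= /eqP; rewrite eqn_modDl => /eqP.
  by move/(@odd_mul_eqmod_cancel n D _ _ oD); rewrite !modn_small // => /val_inj.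
have /codomP [j /(congr1 val) /= Ej] := injF_onto phi_inj (Ordinal (ltn_pmod t P0)).
by exists j.
Qed.

Lemma exists_least_le (P : nat -> Prop) N :
  P N -> exists K, [/\ P K, forall K', P K' -> K <= K' & K <= N].
Proof.
elim/ltn_ind: N => N IH PN.
case: (classic (exists2 K', P K' & K' < N)) => [[K' PK' ltK'N]|noK'].
  by have [K [PK minK leKK']] := IH K' ltK'N PK'; exists K; split; last lia.
exists N; split => // K' PK'; rewrite leqNgt; apply/negP => ltK'N.
by apply: noK'; exists K'.
Qed.

Section SingleCycle.
Context {T : finType} {g : T -> T}.

Lemma fconnect_total_inj : (forall x y, fconnect g x y) -> injective g.
Proof.
move=> conn.
have onto y : y \in codom g.
  by have /iter_findex <- := conn (g y) y; rewrite -iterSr iterS codom_f.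
pose h y := iinv (onto y).
have ghK : cancel h g by move=> y; apply: f_iinv.
have hgK : cancel g h by apply/(bij_can_sym (injF_bij (can_inj ghK))).
exact: can_inj hgK.
Qed.

Hypothesis g_cycle : single_cycle g.

Lemma perm_orbit_enum z : perm_eq (orbit g z) (enum T).
Proof.
apply: uniq_perm; [exact: orbit_uniq | exact: enum_uniq |].
by move=> y; rewrite -fconnect_orbit mem_enum g_cycle.2.
Qed.

Lemma order_single_cycle z : order g z = #|T|.
Proof. by rewrite -size_orbit (perm_size (perm_orbit_enum z)) cardE. Qed.

Lemma iter_card_single_cycle z : iter #|T| g z = z.
Proof. by rewrite -(order_single_cycle z) iter_order //; exact: g_cycle.1. Qed.

Lemma big_iter_single_cycle {R : Type} {idx : R} {op : Monoid.com_law idx}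
    (F : T -> R) z :
  \big[op/idx]_(0 <= j < #|T|) F (iter j g z) = \big[op/idx]_t F t.
Proof.
have trajE N y : \big[op/idx]_(j < N) F (iter j g y) = \big[op/idx]_(t <- traject g y N) F t.
  elim: N y => [|N IH] y; first by rewrite big_ord0 big_nil.
  rewrite big_ord_recl trajectS big_cons -IH; congr (op _ _).
  by apply: eq_bigr => i _; rewrite -iterSr.
rewrite big_mkord trajE -(order_single_cycle z) (perm_big _ (perm_orbit_enum z)).
by rewrite big_enum.
Qed.

End SingleCycle.

Lemma trunc0 x : trunc 0 x = 0.
Proof. by rewrite /trunc big_ord0. Qed.

Lemma truncS n x : trunc n.+1 x = trunc n x + x n * 2 ^ n.
Proof. by rewrite /trunc big_ord_recr. Qed.

Lemma trunc_lt n x : trunc n x < 2 ^ n.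
Proof.
elim: n => [|n IH]; first by rewrite trunc0.
by rewrite truncS expnS; case: (x n) => /=; lia.
Qed.

Lemma trunc_mod {m n} x : m <= n -> trunc m x = trunc n x %% 2 ^ m.
Proof.
elim: n => [|n IH]; first by rewrite leqn0 => /eqP ->; rewrite trunc0.
rewrite leq_eqVlt => /orP [/eqP ->|]; first by rewrite modn_small // trunc_lt.
rewrite ltnS => lemn; rewrite (IH lemn) truncS.
have -> : 2 ^ n = 2 ^ (n - m) * 2 ^ m by rewrite -expnD subnK.
by case: (x n); rewrite /= ?mul1n ?mul0n ?addn0 // addnC modnMDl.
Qed.

Lemma odd_trunc n x : 0 < n -> odd (trunc n x) = x 0.
Proof.
move=> n0; have := trunc_mod x n0; rewrite truncS trunc0 /= modn2.
by case: (x 0); case: (odd _).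
Qed.

Lemma trunc_inj x y : (forall n, trunc n x = trunc n y) -> x = y.
Proof.
move=> eq_xy; apply: functional_extensionality => n.
have := eq_xy n.+1; rewrite !truncS eq_xy => /addnI /eqP.
by rewrite eqn_pmul2r ?expn_gt0 //; case: (x n); case: (y n).
Qed.

Lemma trunc_mkZ2 r n : (forall i, i < n -> r i.+1 = r n %[mod 2 ^ i.+1]) ->
  trunc n (mkZ2 r) = r n %% 2 ^ n.
Proof.
move=> coh; rewrite -sum_binary_digits; apply: eq_bigr => i _.
by rewrite /mkZ2 (odd_div_exp2_eqmod (coh i (ltn_ord i))).
Qed.

Lemma trunc_z2add n x y : trunc n (z2add x y) = (trunc n x + trunc n y) %% 2 ^ n.
Proof.
apply: trunc_mkZ2 => i lt_in.
by rewrite (trunc_mod x lt_in) (trunc_mod y lt_in) modnDm.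
Qed.

Lemma trunc_z2mul n x y : trunc n (z2mul x y) = (trunc n x * trunc n y) %% 2 ^ n.
Proof.
apply: trunc_mkZ2 => i lt_in.
by rewrite (trunc_mod x lt_in) (trunc_mod y lt_in) modnMm.
Qed.

Lemma trunc_z2_of_nat n m : trunc n (z2_of_nat m) = m %% 2 ^ n.
Proof. exact: trunc_mkZ2. Qed.

Lemma absz_modz2 (s : int) : `|(s %% 2)%Z|%N = ~~ (2 %| s)%Z.
Proof.
have h0 : (0 <= (s %% 2)%Z)%R by apply: modz_ge0.
have h1 : ((s %% 2)%Z < 2)%R by apply: ltz_pmod.
by case: dvdz_mod0P => /= h; lia.
Qed.

Lemma odd_trunc_z2_of_int n (s : int) :
  0 < n -> odd (trunc n (z2_of_int s)) = ~~ (2 %| s)%Z.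
Proof.
move=> n0; rewrite odd_trunc // /z2_of_int /mkZ2 expn0 divn1 absz_modz2.
by case: (2 %| s)%Z.
Qed.

Lemma trunc_z2mul1 n h : trunc n (z2mul z2one h) = trunc n h.
Proof.
rewrite trunc_z2mul; case: n => [|n]; first by rewrite !trunc0.
have -> : trunc n.+1 z2one = 1.
  by rewrite /trunc big_ord_recl big1 // => i _.
by rewrite mul1n modn_small // trunc_lt.
Qed.

Lemma truncO_val k y : (truncO k y : nat) = trunc k y.
Proof. by rewrite /= modn_small // trunc_lt. Qed.

Lemma truncO_eq {k a b} : trunc k a = trunc k b -> truncO k a = truncO k b.
Proof. by move=> E; apply: val_inj; rewrite /= E. Qed.

Lemma truncO_z2_of_nat n (r : 'I_(2 ^ n)) : truncO n (z2_of_nat r) = r.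
Proof. by apply: val_inj; rewrite /= trunc_z2_of_nat !modn_small. Qed.

Definition hi k n y := trunc n (xtilde k y).

Lemma hi_lt k n y : hi k n y < 2 ^ n.
Proof. exact: trunc_lt. Qed.

Lemma trunc_addn_hi k n y : trunc (n + k) y = trunc k y + 2 ^ k * hi k n y.
Proof.
elim: n => [|n IH]; first by rewrite /hi trunc0 muln0 addn0.
by rewrite addSn truncS IH /hi truncS /xtilde expnD; ring.
Qed.

Lemma hi_mod {m n} k y : m <= n -> hi k m y = hi k n y %% 2 ^ m.
Proof. exact: trunc_mod. Qed.

Lemma trunc_hi_of_trunc k n y a B : a < 2 ^ k -> B < 2 ^ n ->
  trunc (n + k) y = a + 2 ^ k * B -> trunc k y = a /\ hi k n y = B.
Proof. by move=> ha hB; rewrite trunc_addn_hi; apply: lowDhigh_inj => //; apply: trunc_lt. Qed.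

Lemma trunc_hi_inj k y1 y2 : trunc k y1 = trunc k y2 ->
  (forall n, hi k n y1 = hi k n y2) -> y1 = y2.
Proof.
move=> E1 E2; apply: trunc_inj => n.
rewrite (trunc_mod y1 (leq_addr k n)) (trunc_mod y2 (leq_addr k n)).
by rewrite !trunc_addn_hi E1 E2.
Qed.

Lemma trunc_hi_z2add k n x h : trunc k h = 0 ->
  trunc k (z2add x h) = trunc k x /\ hi k n (z2add x h) = (hi k n x + hi k n h) %% 2 ^ n.
Proof.
move=> h0; apply: trunc_hi_of_trunc; [exact: trunc_lt | by rewrite ltn_pmod ?expn_gt0 |].
by rewrite trunc_z2add !trunc_addn_hi h0 -addnA -mulnDr modn_lowDhigh // trunc_lt.
Qed.

Section TFunctions.
Variable f : Z2 -> Z2.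
Hypothesis f_T : Tfun f.

Lemma fred_truncO n y : fred n f (truncO n y) = truncO n (f y).
Proof.
apply: truncO_eq; apply: f_T.
by rewrite /z2cong trunc_z2_of_nat truncO_val modn_small // trunc_lt.
Qed.

Lemma iter_fred_truncO n m y : iter m (fred n f) (truncO n y) = truncO n (iter m f y).
Proof. by elim: m => //= m ->; rewrite fred_truncO. Qed.

Lemma transitive_T_reach :
  (forall n a b, 0 < n -> exists m, trunc n (iter m f a) = trunc n b) -> transitive_T f.
Proof.
move=> reach n n0.
have conn r1 r2 : fconnect (fred n f) r1 r2.
  rewrite -(truncO_z2_of_nat _ r1) -(truncO_z2_of_nat _ r2).
  have [m /truncO_eq <-] := reach n (z2_of_nat r1) (z2_of_nat r2) n0.
  by rewrite -iter_fred_truncO; apply: fconnect_iter.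
by split => //; apply: fconnect_total_inj.
Qed.

End TFunctions.

Section Fdef.
Variables (k : nat) (u : 'I_(2 ^ k) -> 'I_(2 ^ k)) (v : 'I_(2 ^ k) -> bool)
  (sigma eps : int).

Local Notation f := (fdef k u v sigma eps).

Definition incr (b : bool) : int := ((sigma - eps) * (b : nat)%:Z + eps)%R.

Definition incr_mod n b := trunc n (z2_of_int (incr b)).

Lemma trunc_fdef n y : trunc n (f y) =
  (u (truncO k y) + 2 ^ k * (hi k n y + incr_mod n (v (truncO k y)))) %% 2 ^ n.
Proof.
rewrite /fdef trunc_z2add trunc_z2_of_nat trunc_z2mul trunc_z2_of_nat trunc_z2add.
by rewrite modnDml modnDmr -modnDmr modnMml modnMmr modnDmr.
Qed.

Lemma trunc_hi_fdef n y :
  trunc k (f y) = u (truncO k y) /\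
  hi k n (f y) = (hi k n y + incr_mod n (v (truncO k y))) %% 2 ^ n.
Proof.
apply: trunc_hi_of_trunc; [exact: ltn_ord | by rewrite ltn_pmod ?expn_gt0 |].
rewrite trunc_fdef modn_lowDhigh ?ltn_ord // (hi_mod _ _ (leq_addr k n)).
by rewrite /incr_mod (trunc_mod _ (leq_addr k n)) modnDm.
Qed.

Lemma truncO_fdef y : truncO k (f y) = u (truncO k y).
Proof. by apply: val_inj; rewrite /= (trunc_hi_fdef 0 y).1 modn_small. Qed.

Lemma hi_fdef n y : hi k n (f y) = (hi k n y + incr_mod n (v (truncO k y))) %% 2 ^ n.
Proof. exact: (trunc_hi_fdef n y).2. Qed.

Lemma truncO_iter_fdef m y : truncO k (iter m f y) = iter m u (truncO k y).
Proof. by elim: m => //= m IH; rewrite truncO_fdef IH. Qed.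

Lemma hi_iter_fdef n m y : hi k n (iter m f y) =
  (hi k n y + \sum_(j < m) incr_mod n (v (iter j u (truncO k y)))) %% 2 ^ n.
Proof.
elim: m => [|m IH]; first by rewrite big_ord0 addn0 modn_small // hi_lt.
by rewrite iterS hi_fdef IH truncO_iter_fdef big_ord_recr modnDml addnA.
Qed.

Lemma fdef_Tfun : Tfun_word k u -> Tfun f.
Proof.
move=> u_T s a b; rewrite /z2cong => eq_ab.
have [le_sk|lt_ks] := leqP s k.
  rewrite (trunc_mod (f a) le_sk) (trunc_mod (f b) le_sk).
  rewrite (trunc_hi_fdef 0 a).1 (trunc_hi_fdef 0 b).1; apply: u_T => //.
  by rewrite !truncO_val -!trunc_mod.
move: eq_ab; rewrite -(subnK (ltnW lt_ks)) !trunc_addn_hi => eq_ab.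
have [eq_lo eq_hi] := lowDhigh_inj (trunc_lt _ _) (trunc_lt _ _) eq_ab.
rewrite (trunc_hi_fdef 0 a).1 (trunc_hi_fdef 0 b).1 !hi_fdef (truncO_eq eq_lo).
by rewrite eq_hi.
Qed.

Lemma fdef_addr x h : trunc k h = 0 -> f (z2add x h) = z2add (f x) h.
Proof.
move=> h0; have eq_lo := truncO_eq (trunc_hi_z2add _ 0 x _ h0).1.
apply: (trunc_hi_inj k).
  by rewrite (trunc_hi_z2add _ 0 (f x) _ h0).1 !(trunc_hi_fdef 0 _).1 eq_lo.
move=> n; rewrite (trunc_hi_z2add _ n (f x) _ h0).2 !hi_fdef (trunc_hi_z2add _ n x _ h0).2.
by rewrite eq_lo !modnDml; congr (_ %% _); ring.
Qed.

End Fdef.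

Section Transitivity.
Variables (k : nat) (u : 'I_(2 ^ k) -> 'I_(2 ^ k)) (v : 'I_(2 ^ k) -> bool)
  (sigma eps : int).
Hypothesis u_cycle : single_cycle u.
Hypothesis v_odd : odd #|[set z : 'I_(2 ^ k) | v z]|.
Hypothesis sigma_odd : ~~ (2 %| sigma)%Z.
Hypothesis eps_even : (2 %| eps)%Z.

Local Notation f := (fdef k u v sigma eps).
Local Notation incr_mod := (incr_mod sigma eps).

Lemma odd_incr_mod n b : 0 < n -> odd (incr_mod n b) = b.
Proof.
move=> n0; rewrite /incr_mod odd_trunc_z2_of_int // /incr.
by case: b; rewrite /= ?mulr1 ?subrK ?mulr0 ?add0r ?sigma_odd ?eps_even.
Qed.

Lemma odd_sum_incr_mod_cycle n z :
  0 < n -> odd (\sum_(j < 2 ^ k) incr_mod n (v (iter j u z))).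
Proof.
move=> n0; rewrite -(big_mkord xpredT (fun j => incr_mod n (v (iter j u z)))).
rewrite -[X in \sum_(0 <= j < X) _](card_ord (2 ^ k)).
rewrite (big_iter_single_cycle u_cycle (fun t => incr_mod n (v t)) z).
rewrite (big_morph odd oddD (erefl (odd 0))).
under eq_bigr => t _ do rewrite odd_incr_mod //.
move: v_odd; rewrite -sum1_card big_mkcond (big_morph odd oddD (erefl (odd 0))).
by rewrite (eq_bigr v) // => t _; rewrite inE; case: (v t).
Qed.

Lemma iter_cycles_fdef n j y :
  truncO k (iter (j * 2 ^ k) f y) = truncO k y /\
  hi k n (iter (j * 2 ^ k) f y) =
    (hi k n y + j * \sum_(i < 2 ^ k) incr_mod n (v (iter i u (truncO k y)))) %% 2 ^ n.
Proof.
elim: j => [|j [IHlo IHhi]]; first by rewrite addn0 modn_small // hi_lt.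
have u_period : iter (2 ^ k) u (truncO k y) = truncO k y.
  by have := iter_card_single_cycle u_cycle (truncO k y); rewrite card_ord.
rewrite mulSn iterD truncO_iter_fdef hi_iter_fdef IHlo u_period; split => //.
by rewrite IHhi modnDml -addnA mulSn [_ + j * _]addnC.
Qed.

(* First move the low part to that of b along the cycle of u, then run
   whole cycles, each adding the odd sum D to the high part. *)
Lemma fdef_reach n a b : 0 < n -> exists m, trunc n (iter m f a) = trunc n b.
Proof.
move=> n0.
set m1 := findex u (truncO k a) (truncO k b).
have lo_eq := iter_findex (u_cycle.2 (truncO k a) (truncO k b)).
set a' := iter m1 f a.
have lo'_eq : truncO k a' = truncO k b by rewrite truncO_iter_fdef lo_eq.
have oddD := odd_sum_incr_mod_cycle n (truncO k b) n0.
have [j hi_eq] := exists_odd_mul_eqmod n _ (hi k n a') (hi k n b) oddD.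
have [lo_j hi_j] := iter_cycles_fdef n j a'.
exists (j * 2 ^ k + m1); rewrite iterD -/a'.
rewrite (trunc_mod _ (leq_addr k n)) (trunc_mod b (leq_addr k n)) !trunc_addn_hi.
by rewrite hi_j lo'_eq hi_eq (modn_small (hi_lt _ _ _)) -!truncO_val lo_j lo'_eq.
Qed.

End Transitivity.

Theorem mainTheorem3 (k : nat) (u : 'I_(2 ^ k) -> 'I_(2 ^ k))
    (v : 'I_(2 ^ k) -> bool) (sigma eps : int) :
  0 < k ->
  Tfun_word k u ->
  single_cycle u ->
  odd #|[set z : 'I_(2 ^ k) | v z]| ->
  ~~ (2 %| sigma)%Z ->
  (2 %| eps)%Z ->
  let f := fdef k u v sigma eps in
  [/\ Tfun f, transitive_T f,
      (forall x h : Z2, trunc k h = 0 -> f (z2add x h) = z2add (f x) h),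
      unif_diff_with 2 f (fun _ => z2one) k &
      exists K, is_N 2 f K /\ K <= k].
Proof.
move=> _ u_T u_cycle v_odd sigma_odd eps_even f.
have f_T : Tfun f by exact: fdef_Tfun.
have f_addr x h : trunc k h = 0 -> f (z2add x h) = z2add (f x) h by exact: fdef_addr.
have f_diff : unif_diff_with 2 f (fun _ => z2one) k.
  by move=> x h n _ h0; rewrite f_addr // /z2cong !trunc_z2add trunc_z2mul1.
split => //.
- exact/transitive_T_reach/fdef_reach.
- have : exists f', unif_diff_with 2 f f' k by exists (fun _ => z2one).
  case/(exists_least_le (fun K => exists f', unif_diff_with 2 f f' K)) => K [? ? ?].
  by exists K.
Qed.
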